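(* Let $R$ be an infinite-dimensional affine algebra over a field $K$, let $\{e_i\}_{i\ge1}$ be a basis of $R$ over $K$, and let $S=\{r_1,\dots,r_s\}\subseteq R$. Suppose that for every $l$ and every choice of distinct basis elements $e_{i_1},\dots,e_{i_l}$, the $K$-span of $\{e_{i_t}r_j: 1\le t\le l,\ 1\le j\le s\}$ has dimension at least $2l$. Then there exist a partition $\{e_i\}_{i\ge1}=A_1\cup\cdots\cup A_m$ and elements $g_1,h_1,\dots,g_m,h_m\in S$ such that the sets $A_1g_1,A_1h_1,A_2g_2,A_2h_2,\dots,A_mg_m,A_mh_m$ are mutually independent.
   Context: An affine algebra is a finitely generated associative algebra over $K$, not necessarily unital. For $A\subseteq R$, $g\in R$, $Ag=\{ag:a\in A\}$. Subsets $B_1,\dots,B_k$ of $R$ are mutually independent if they are pairwise disjoint and their union is linearly independent over $K$. *)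

From HB Require Import structures.
From mathcomp Require Import all_boot all_order all_algebra.
Set Implicit Arguments. Unset Strict Implicit. Unset Printing Implicit Defensive.
Import GRing.Theory.
Local Open Scope ring_scope.

Section Defs.
Variables (K : fieldType) (R : lmodType K).

Definition is_assoc_algebra_mul (mul : R -> R -> R) : Prop :=
  [/\ (forall x y z, mul x (mul y z) = mul (mul x y) z),
      (forall x y z, mul (x + y) z = mul x z + mul y z),
      (forall x y z, mul x (y + z) = mul x y + mul x z),
      (forall (a : K) x y, mul (a *: x) y = a *: mul x y)
    & (forall (a : K) x y, mul x (a *: y) = a *: mul x y)].

Inductive in_subalg (mul : R -> R -> R) (gens : seq R) : R -> Prop :=
  | sa_gen x : x \in gens -> in_subalg mul gens x
  | sa_zero : in_subalg mul gens 0
  | sa_add x y : in_subalg mul gens x -> in_subalg mul gens y ->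
                 in_subalg mul gens (x + y)
  | sa_scale (a : K) x : in_subalg mul gens x -> in_subalg mul gens (a *: x)
  | sa_mul x y : in_subalg mul gens x -> in_subalg mul gens y ->
                 in_subalg mul gens (mul x y).

Definition affine (mul : R -> R -> R) : Prop :=
  exists gens : seq R, forall v, in_subalg mul gens v.

Definition lin_indep (X : R -> Prop) : Prop :=
  forall (s : seq R) (c : R -> K),
    uniq s -> (forall x, x \in s -> X x) ->
    \sum_(x <- s) c x *: x = 0 -> forall x, x \in s -> c x = 0.

Definition in_span (X : R -> Prop) (v : R) : Prop :=
  exists (s : seq R) (c : R -> K),
    (forall x, x \in s -> X x) /\ v = \sum_(x <- s) c x *: x.

Definition span_dim_ge (X : R -> Prop) (n : nat) : Prop :=
  exists s : seq R, [/\ size s = n, uniq s,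
    (forall x, x \in s -> in_span X x) & lin_indep (fun x => x \in s)].

Definition infinite_dim : Prop :=
  ~ exists s : seq R, forall v, in_span (fun x => x \in s) v.

(* e : nat -> R is a basis of R (indexed by nat instead of i >= 1). *)
Definition is_basis (e : nat -> R) : Prop :=
  [/\ injective e, lin_indep (fun x => exists i, x = e i)
    & forall v, in_span (fun x => exists i, x = e i) v].

Definition rmul_img (mul : R -> R -> R) (A : R -> Prop) (g : R) : R -> Prop :=
  fun y => exists x, A x /\ y = mul x g.

(* Mutually independent family of subsets: pairwise disjoint with
   linearly independent union. *)
Definition mutually_independent (I : Type) (B : I -> R -> Prop) : Prop :=
  (forall i j, i <> j -> forall x, B i x -> B j x -> False) /\
  lin_indep (fun x => exists i, B i x).

End Defs.

(* For finitely many basis vectors e_0, ..., e_(n-1), choosing two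
   elements g_i, h_i of S so that the 2n products e_i g_i, e_i h_i are distinct
   and linearly independent is a transversal problem for the representable
   matroid of the products e_i r (r in S): both slots (i, false) and (i, true)
   may be filled by any e_i r.  The hypothesis dim span {e_i r} >= 2l is exactly
   the Hall-Rado condition for this family, so Rado's theorem provides such a
   choice.  Since every e_i has finitely many possible pairs (g_i, h_i), Koenig's
   lemma turns these choices for every n into a single choice for all i, and
   grouping the e_i according to their pair (g_i, h_i) gives the partition. *)

From HB Require Import structures.
From mathcomp Require Import all_boot all_order all_algebra.
From mathcomp Require Import zify.
From Stdlib Require Import Classical ClassicalEpsilon.
Import GRing.Theory.
Local Open Scope ring_scope.

Set Implicit Arguments. Unset Strict Implicit. Unset Printing Implicit Defensive.

Section IndependentFamilies.
Variables (K : fieldType) (V : lmodType K).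

Definition indep_family (I : eqType) (D : I -> Prop) (u : I -> V) : Prop :=
  forall (s : seq I) (c : I -> K), uniq s -> (forall i, i \in s -> D i) ->
    \sum_(i <- s) c i *: u i = 0 -> forall i, i \in s -> c i = 0.

Lemma lin_indepE (X : V -> Prop) : lin_indep X <-> indep_family X id.
Proof. by []. Qed.

Lemma indep_familyS (I : eqType) (D D' : I -> Prop) (u : I -> V) :
  (forall i, D' i -> D i) -> indep_family D u -> indep_family D' u.
Proof. by move=> D'D indep s c s_uniq sD'; apply: indep => // i /sD'/D'D. Qed.

Lemma indep_family_inj (I : eqType) (D : I -> Prop) (u : I -> V) i j :
  indep_family D u -> D i -> D j -> u i = u j -> i = j.
Proof.
move=> indep Di Dj uij; apply/eqP/negPn/negP => neq_ij.
pose c k := if k == i then 1 else - 1 : K.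
have ij_uniq : uniq [:: i; j] by rewrite /= inE neq_ij.
have ijD k : k \in [:: i; j] -> D k by rewrite !inE => /predU1P[->|/eqP->].
have sum0 : \sum_(k <- [:: i; j]) c k *: u k = 0.
  by rewrite !big_cons big_nil /c eqxx eq_sym (negbTE neq_ij) scaleN1r scale1r addr0 uij subrr.
have := indep _ c ij_uniq ijD sum0 i (mem_head _ _).
by rewrite /c eqxx => /eqP; rewrite oner_eq0.
Qed.

Lemma exists_map_preimage (A B : eqType) (f : A -> B) (P : A -> Prop) (s : seq B) :
  {in s, forall y, exists2 x, P x & f x = y} ->
  exists2 t, map f t = s & forall x, x \in t -> P x.
Proof.
elim: s => [_|y s IHs preim]; first by exists [::].
have [x Px fx] := preim y (mem_head _ _).
have [|t ft tP] := IHs; first by move=> z zs; apply: preim; rewrite inE zs orbT.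
by exists (x :: t) => [|z]; rewrite /= ?fx ?ft // inE => /predU1P[->|/tP].
Qed.

Lemma indep_family_reindex (I J : eqType) (D : I -> Prop) (D' : J -> Prop)
    (iota : I -> J) (u : I -> V) (w : J -> V) :
  (forall i, D i -> w (iota i) = u i) ->
  (forall j, D' j -> exists2 i, D i & iota i = j) ->
  indep_family D u -> indep_family D' w.
Proof.
move=> wu onto indep s c s_uniq sD' sum0 j js.
have [t iota_t tD] := exists_map_preimage (fun j js => onto j (sD' j js)).
have t_uniq : uniq t by apply: (@map_uniq _ _ iota); rewrite iota_t.
have sum_t0 : \sum_(i <- t) c (iota i) *: u i = 0.
  by rewrite -[RHS]sum0 -iota_t big_map; apply: eq_big_seq => i /tD/wu ->.
by move: js; rewrite -iota_t => /mapP[i it ->]; apply: indep sum_t0 i it.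
Qed.

Lemma indep_family_bounded (I : eqType) (size_of : I -> nat) (u : I -> V) :
  (forall n, indep_family (fun i => size_of i < n)%N u) ->
  indep_family (fun _ => True) u.
Proof.
move=> indep s c s_uniq _; apply: (indep (\max_(i <- s) size_of i).+1) => // i i_s.
by rewrite ltnS (leq_bigmax_seq _ i_s).
Qed.

End IndependentFamilies.

Lemma indep_family_linear (K : fieldType) (V W : lmodType K) (phi : {linear V -> W})
    (I : eqType) (D : I -> Prop) (u : I -> V) :
  injective phi -> indep_family D u -> indep_family D (phi \o u).
Proof.
move=> phi_inj indep s c s_uniq sD sum0; apply: indep => //.
by apply: phi_inj; rewrite linear0 linear_sum -[RHS]sum0; apply: eq_bigr => i _; rewrite linearZ.
Qed.

Lemma indep_family_of_linear (K : fieldType) (V W : lmodType K) (phi : {linear V -> W})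
    (I : eqType) (D : I -> Prop) (u : I -> V) :
  indep_family D (fun i => phi (u i)) -> indep_family D u.
Proof.
move=> indep s c s_uniq sD sum0; apply: indep => //.
by rewrite -[RHS](linear0 phi) -sum0 linear_sum; apply: eq_bigr => i _; rewrite linearZ.
Qed.

Lemma free_of_lin_indep (F : fieldType) (vT : vectType F) (t : seq vT) :
  uniq t -> lin_indep (fun y => y \in t) -> free t.
Proof.
move=> t_uniq t_indep; rewrite -[t]in_tupleE; apply/freeP => k sum0 i.
pose c y := oapp k 0 (insub (index y t) : option 'I_(size t)).
have c_nth (j : 'I_(size t)) : c t`_j = k j by rewrite /c index_uniq // valK.
rewrite -c_nth; apply: (t_indep t c) => //; last exact: mem_nth.
by rewrite (big_nth 0) big_mkord -[RHS]sum0; apply: eq_bigr => j _; rewrite c_nth.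
Qed.

Section Rado.
Variables (F : fieldType) (vT : vectType F).

Lemma dim_sum_lines (I : finType) (P : pred I) (u : I -> vT) :
  (\dim (\sum_(i | P i) <[u i]>) <= #|P|)%N.
Proof.
apply: leq_trans (dimv_leq_sum _ _ _) _; rewrite -sum1_card.
by apply: leq_sum => i _; rewrite dim_vline leq_b1.
Qed.

Lemma indep_family_of_dim (I : finType) (u : I -> vT) :
  (#|I| <= \dim (\sum_i <[u i]>))%N -> indep_family (fun _ => True) u.
Proof.
move=> dim_ge s c s_uniq _ sum0 i0 i0s; apply/eqP/negPn/negP => c_i0.
pose W := (\sum_(i | i != i0) <[u i]>)%VS.
have ui0_W : u i0 \in W.
  have: c i0 *: u i0 = - \sum_(i <- s | i != i0) c i *: u i.
    by apply/eqP; rewrite -addr_eq0 -(bigD1_seq _ i0s s_uniq) sum0.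
  move/(canRL (scalerK c_i0)) ->; rewrite rpredZ // rpredN rpred_sum // => i ne_i.
  by rewrite rpredZ // memvE (sumv_sup i) ?subvv.
have: (\dim (\sum_i <[u i]>) <= #|I|.-1)%N.
  rewrite -(cardC1 i0) (bigD1 i0) //=; apply: leq_trans (dim_sum_lines _ u).
  by apply/dimvS; rewrite subv_add subvv andbT -memvE.
move: dim_ge; have : (0 < #|I|)%N by apply/card_gt0P; exists i0.
lia.
Qed.

Variables (G : finType) (v : G -> vT).

Definition rank (T : {set G}) : nat := \dim (\sum_(g in T) <[v g]>).

Lemma rank0 : rank set0 = 0%N.
Proof. by rewrite /rank big_set0 dimv0. Qed.

Lemma rankS (T T' : {set G}) : T \subset T' -> (rank T <= rank T')%N.
Proof.
by move=> /subsetP sTT'; apply/dimvS/subv_sumP => g /sTT' gT'; apply: sumv_sup gT' (subvv _).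
Qed.

Lemma rank_submodular (T T' : {set G}) :
  (rank (T :|: T') + rank (T :&: T') <= rank T + rank T')%N.
Proof.
rewrite -(dimv_sum_cap (\sum_(g in T) <[v g]>)) leq_add ?dimvS //.
  apply/subv_sumP => g; rewrite inE => /orP[] gT.
    by apply: subv_trans (addvSl _ _); apply: sumv_sup gT (subvv _).
  by apply: subv_trans (addvSr _ _); apply: sumv_sup gT (subvv _).
rewrite subv_cap; apply/andP; split; apply/subv_sumP => g; rewrite inE => /andP[gT gT'].
  exact: sumv_sup gT (subvv _).
exact: sumv_sup gT' (subvv _).
Qed.

Definition hall (A : finType) (X : A -> {set G}) : bool :=
  [forall J : {set A}, #|J| <= rank (\bigcup_(a in J) X a)]%N.

Section Shrink.
Variables (A : finType) (X : A -> {set G}) (a : A).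

Definition shrink (z : G) (b : A) : {set G} := if b == a then X a :\ z else X b.

Lemma shrink_sub z b : shrink z b \subset X b.
Proof. by rewrite /shrink; case: eqP => [->|_]; rewrite ?subsetDl. Qed.

Lemma shrink_card z : z \in X a -> (\sum_b #|shrink z b| < \sum_b #|X b|)%N.
Proof.
move=> za; rewrite (bigD1 a) // [X in (_ < X)%N](bigD1 a) //=.
rewrite (eq_bigr (fun b => #|X b|)) => [|b /negbTE ne_ba]; last by rewrite /shrink ne_ba.
by rewrite /shrink eqxx ltn_add2r [X in (_ < X)%N](cardsD1 z) za.
Qed.

Lemma shrink_violator_mem z (J : {set A}) : hall X ->
  (rank (\bigcup_(b in J) shrink z b) < #|J|)%N -> a \in J.
Proof.
move=> /forallP /(_ J) hallJ; apply: contraLR => aJ; rewrite -leqNgt.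
by rewrite (eq_bigr X) // => b bJ; rewrite /shrink ifN //; apply: contraNneq aJ => <-.
Qed.

(* If both shrinkings fail, at J1 and at J2, then submodularity of the rank
   contradicts Hall's condition for J1 :|: J2 and (J1 :&: J2) :\ a. *)
Lemma hall_shrink x y : hall X -> x \in X a -> y \in X a -> x != y ->
  hall (shrink x) || hall (shrink y).
Proof.
move=> hallX xa ya ne_xy; apply: contraT; rewrite negb_or.
case/andP=> /forallPn[J1]; rewrite -ltnNge => J1bad /forallPn[J2]; rewrite -ltnNge => J2bad.
have aJ1 := shrink_violator_mem hallX J1bad; have aJ2 := shrink_violator_mem hallX J2bad.
set U1 := \bigcup_(b in J1) shrink x b in J1bad.
set U2 := \bigcup_(b in J2) shrink y b in J2bad.
have shrink_eq z b : b != a -> shrink z b = X b by move=> /negbTE ne_ba; rewrite /shrink ne_ba.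
have sub_union : \bigcup_(b in J1 :|: J2) X b \subset U1 :|: U2.
  apply/subsetP => g /bigcupP[b]; rewrite !inE; have [-> _ ga|ne_ba J12b gb] := eqVneq b a.
    have [gx|ne_gx] := eqVneq g x.
      by apply/orP; right; apply/bigcupP; exists a; rewrite // /shrink eqxx !inE gx ne_xy.
    by apply/orP; left; apply/bigcupP; exists a; rewrite // /shrink eqxx !inE ne_gx.
  by case/orP: J12b => Jb; apply/orP; [left|right]; apply/bigcupP; exists b; rewrite ?shrink_eq.
have sub_inter : \bigcup_(b in (J1 :&: J2) :\ a) X b \subset U1 :&: U2.
  apply/subsetP => g /bigcupP[b]; rewrite !inE => /and3P[ne_ba J1b J2b] gb.
  by apply/andP; split; apply/bigcupP; exists b; rewrite ?shrink_eq.
have := leq_trans (forallP hallX _) (rankS sub_union).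
have := leq_trans (forallP hallX _) (rankS sub_inter).
have := rank_submodular U1 U2; have := cardsUI J1 J2.
have := cardsD1 a (J1 :&: J2); rewrite inE aJ1 aJ2.
lia.
Qed.

End Shrink.

Theorem rado (A : finType) (X : A -> {set G}) : hall X ->
  exists2 f : A -> G, (forall a, f a \in X a) & indep_family (fun _ => True) (v \o f).
Proof.
have [n] := ubnP (\sum_a #|X a|); elim: n X => // n IHn X; rewrite ltnS => size_X hallX.
have [/existsP[a /card_gt1P[x [y [xa ya ne_xy]]]]|/existsPn all_small] :=
  boolP [exists a, 1 < #|X a|]%N.
  have shrink_rado z : z \in X a -> hall (shrink X a z) ->
      exists2 f : A -> G, (forall a, f a \in X a) & indep_family (fun _ => True) (v \o f).
    move=> za /(IHn _ (leq_trans (shrink_card za) size_X))[f f_shrink f_indep].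
    by exists f => // b; apply: subsetP (shrink_sub _ _ _ _) _ (f_shrink b).
  by case/orP: (hall_shrink hallX xa ya ne_xy) => /shrink_rado; apply.
have /fin_all_exists[f Xf] : forall a, exists g, X a = [set g].
  move=> a; apply/cards1P; rewrite eqn_leq leqNgt all_small card_gt0.
  apply: contraTneq (forallP hallX [set a]) => Xa0.
  by rewrite cards1 big_set1 Xa0 rank0.
exists f => [a|]; first by rewrite Xf set11.
apply: indep_family_of_dim; rewrite -cardsT; apply: leq_trans (forallP hallX setT) _.
apply/dimvS/subv_sumP => g /bigcupP[b _]; rewrite Xf inE => /eqP->.
exact: sumv_sup (subvv _).
Qed.

End Rado.

Section Expansion.
Variables (K : fieldType) (R : lmodType K) (e : nat -> R).

Definition expand N (r : 'rV[K]_N) : R := \sum_(k < N) r 0 k *: e k.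
Arguments expand N r : clear implicits.

Lemma expand_is_linear N : linear (expand N).
Proof.
move=> a r r'; rewrite /expand scaler_sumr -big_split; apply: eq_bigr => k _.
by rewrite !mxE scalerDl scalerA.
Qed.

HB.instance Definition _ N :=
  GRing.isLinear.Build _ _ _ _ (expand N) (@expand_is_linear N).

Lemma expand_delta N (k : 'I_N) : expand N (delta_mx 0 k) = e k.
Proof.
rewrite /expand (bigD1 k) //= mxE !eqxx scale1r big1 ?addr0 // => j ne_jk.
by rewrite mxE (negbTE ne_jk) andbF scale0r.
Qed.

Hypothesis e_basis : is_basis e.

Lemma expand_inj N : injective (expand N).
Proof.
have [e_inj e_indep _] := e_basis.
apply: raddf_inj => r r0; apply/rowP => k; rewrite mxE.
pose c x := \sum_(j < N | e j == x) r 0 j.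
have c_e (j : 'I_N) : c (e j) = r 0 j.
  by rewrite /c (eq_bigl (pred1 j)) ?big_pred1_eq // => i; rewrite /= (inj_eq e_inj).
rewrite -c_e; apply: (e_indep [seq e (val j) | j <- enum 'I_N] c); rewrite ?map_f ?mem_enum //.
- by rewrite map_inj_uniq ?enum_uniq // => i j /e_inj/val_inj.
- by move=> x /mapP[j _ ->]; exists (val j).
by rewrite big_map big_enum -[RHS]r0; apply: eq_bigr => j _; rewrite c_e.
Qed.

(* Junk outside the span of [e 0], ..., [e N.-1]. *)
Definition coords N (x : R) : 'rV[K]_N := epsilon (inhabits 0) (fun r => expand N r = x).

Lemma expandK N : cancel (expand N) (coords N).
Proof.
move=> r; apply: expand_inj.
by apply: (epsilon_spec (inhabits 0) (fun r' => expand N r' = expand N r)); exists r.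
Qed.

Lemma expand_onto x : exists N0, forall N, (N0 <= N)%N -> exists r : 'rV[K]_N, expand N r = x.
Proof.
have [_ _ /(_ x)[s [c [s_basis ->]]]] := e_basis.
elim: s s_basis => [_|y s IHs s_basis].
  by exists 0%N => N _; exists 0; rewrite linear0 big_nil.
have [|N0 expand_s] := IHs; first by move=> z zs; apply: s_basis; rewrite inE zs orbT.
have [i ->] := s_basis y (mem_head _ _).
exists (maxn N0 i.+1) => N; rewrite geq_max => /andP[/expand_s[r r_s] lt_iN].
exists (c (e i) *: delta_mx 0 (Ordinal lt_iN) + r).
by rewrite linearD linearZ /= expand_delta r_s big_cons.
Qed.

Lemma expand_onto_fin (I : finType) (u : I -> R) :
  exists N, forall i, expand N (coords N (u i)) = u i.
Proof.
have /fin_all_exists[N0 expand_u] := fun i => expand_onto (u i).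
exists (\max_i N0 i)%N => i.
by have [r <-] := expand_u i _ (leq_bigmax i); rewrite expandK.
Qed.

Lemma size_lin_indep_le_dim N (V : {vspace 'rV[K]_N}) (s : seq R) :
  uniq s -> lin_indep (fun x => x \in s) ->
  {in s, forall x, exists2 r, r \in V & expand N r = x} -> (size s <= \dim V)%N.
Proof.
move=> s_uniq s_indep s_V.
have coordsK : {in s, cancel (coords N) (expand N)}.
  by move=> x /s_V[r _ <-]; rewrite expandK.
pose t := map (coords N) s.
have t_indep : lin_indep (fun y => y \in t).
  apply/lin_indepE; apply: (indep_family_of_linear (phi := expand N)).
  apply: (indep_family_reindex (iota := coords N) _ _ s_indep) => [x /coordsK //|y /mapP[x xs ->]].
  by exists x.
have /eqP t_dim : free t.
  by apply: free_of_lin_indep t_indep; rewrite (map_inj_in_uniq (can_in_inj coordsK)).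
rewrite -(size_map (coords N)) -t_dim; apply/dimvS/span_subvP => y /mapP[x /s_V[r rV <-] ->].
by rewrite expandK.
Qed.

End Expansion.

Arguments expand {K R} e N r.

Section Compactness.
Variables (T : finType) (P : nat -> (nat -> T) -> Prop).
Hypothesis P_local :
  forall n f f', (forall i, (i < n)%N -> f i = f' i) -> P n f -> P n f'.
Hypothesis P_antimono : forall m n f, (m <= n)%N -> P n f -> P m f.
Hypothesis P_sat : forall n, exists f, P n f.

Definition extendable k (f : nat -> T) : Prop :=
  forall N, exists2 g, P N g & forall i, (i < k)%N -> g i = f i.

Definition set_at (f : nat -> T) k t i : T := if i == k then t else f i.

Lemma extendable_step k f : extendable k f -> exists t, extendable k.+1 (set_at f k t).
Proof.
move=> ext_f; apply: NNPP => no_t.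
have /fin_all_exists[N bad] : forall t, exists N,
    forall g, P N g -> ~ (forall i, (i < k.+1)%N -> g i = set_at f k t i).
  move=> t; apply: NNPP => ok_t; apply: no_t; exists t => N; apply: NNPP => no_g.
  by apply: ok_t; exists N => g PNg agree; apply: no_g; exists g.
have [g Pg agree] := ext_f (\max_t N t)%N.
apply: (bad (g k) g (P_antimono (leq_bigmax _) Pg)) => i; rewrite ltnS leq_eqVlt /set_at.
by case: eqP => [->|_] //= /agree.
Qed.

Lemma inhabited_choices : inhabited T.
Proof. by have [f _] := P_sat 0; exact: inhabits (f 0%N). Qed.

Definition next_choice k f : T :=
  epsilon inhabited_choices (fun t => extendable k f -> extendable k.+1 (set_at f k t)).

(* Only the values of [branch k] below [k] matter. *)
Fixpoint branch k : nat -> T :=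
  if k is k'.+1 then set_at (branch k') k' (next_choice k' (branch k'))
  else fun _ => epsilon inhabited_choices (fun _ => True).

Lemma branch_extendable k : extendable k (branch k).
Proof.
elim: k => [|k IHk] /=; first by move=> N; have [g Pg] := P_sat N; exists g.
have [t ext_t] := extendable_step IHk.
have := epsilon_spec inhabited_choices
  (fun t => extendable k (branch k) -> extendable k.+1 (set_at (branch k) k t)).
by apply; [exists t | exact: IHk].
Qed.

Lemma branch_stable k i : (i < k)%N -> branch k i = branch i.+1 i.
Proof.
elim: k => // k IHk; rewrite ltnS leq_eqVlt => /predU1P[-> //|lt_ik].
by rewrite /= /set_at ltn_eqF // IHk.
Qed.

Theorem finite_choice_compactness : exists f, forall n, P n f.
Proof.
exists (fun i => branch i.+1 i) => n; have [g Pg agree] := branch_extendable n n.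
by apply: P_local Pg => i lt_in; rewrite agree // branch_stable.
Qed.

End Compactness.

Lemma finite_range (T : finType) (p : nat -> T) : exists m (q : 'I_m -> T),
  injective q /\ forall t, (exists k, q k = t) <-> (exists i, p i = t).
Proof.
have /fin_all_exists[used usedP] : forall t, exists b : bool, b <-> exists i, p i = t.
  move=> t; have [in_range|not_in_range] := classic (exists i, p i = t).
    by exists true.
  by exists false; split=> // /not_in_range.
exists #|used|, enum_val; split=> [|t]; first exact: enum_val_inj.
split=> [[k <-]|/usedP used_t]; first exact/usedP/enum_valP.
by exists (enum_rank_in used_t t); rewrite enum_rankK_in.
Qed.

Section Products.
Variables (K : fieldType) (R : lmodType K) (mul : R -> R -> R) (e : nat -> R).
Hypothesis e_basis : is_basis e.
Variable S : seq R.
Hypothesis S_dim : forall I : seq nat, uniq I ->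
  span_dim_ge (fun y => exists i r, [/\ i \in I, r \in S & y = mul (e i) r]) (2 * size I).

Definition product (p : nat -> {ffun bool -> seq_sub S}) (ib : nat * bool) : R :=
  mul (e ib.1) (val (p ib.1 ib.2)).

Lemma hall_products n N (v : 'I_n * seq_sub S -> 'rV[K]_N) :
    (forall g, expand e N (v g) = mul (e g.1) (val g.2)) ->
  hall v (fun a : 'I_n * bool => [set g | g.1 == a.1]).
Proof.
move=> expand_v; apply/forallP => J; rewrite /rank; set V := (\sum_(g in _) <[v g]>)%VS.
(* #|J| <= 2 #|I| <= dim span {e_i r : i in I, r in S} <= rank, where I := J.1. *)
pose I := [set a.1 | a in J].
have card_J : (#|J| <= 2 * #|I|)%N.
  rewrite mulnC -card_bool -cardsT -cardsX; apply/subset_leq_card/subsetP => a aJ.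
  by rewrite !inE imset_f.
have I_uniq : uniq (map val (enum I)) by rewrite map_inj_uniq ?enum_uniq //; exact: val_inj.
have [s [size_s s_uniq s_span s_indep]] := S_dim I_uniq.
rewrite size_map -cardE in size_s.
have products_V y : (exists i r, [/\ i \in map val (enum I), r \in S & y = mul (e i) r]) ->
    coords e N y \in V /\ expand e N (coords e N y) = y.
  move=> [_ [r [/mapP[_ /[!mem_enum] /imsetP[a aJ ->] ->] rS ->]]].
  rewrite -[mul _ _](expand_v (a.1, SeqSub rS)) (expandK e_basis); split=> //.
  by rewrite memvE (sumv_sup (a.1, SeqSub rS)) ?subvv //; apply/bigcupP; exists a; rewrite ?inE.
apply: leq_trans card_J _; rewrite -size_s.
apply: (size_lin_indep_le_dim e_basis (V := V) s_uniq s_indep).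
move=> x /s_span[ys [c [ys_products ->]]].
have ys_V y : y \in ys -> coords e N y \in V /\ expand e N (coords e N y) = y.
  by move/ys_products/products_V.
exists (\sum_(y <- ys) c y *: coords e N y).
  by rewrite big_seq rpred_sum // => y /ys_V[y_V _]; rewrite rpredZ.
by rewrite linear_sum; apply: eq_big_seq => y /ys_V[_ expand_y]; rewrite linearZ /= expand_y.
Qed.

Lemma exists_indep_upto n :
  exists p, indep_family (fun ib : nat * bool => ib.1 < n)%N (product p).
Proof.
suff [p indep_p] : exists p, indep_family (fun ib : nat * bool => ib.1 < n.+1)%N (product p).
  by exists p; apply: indep_familyS indep_p => ib /ltnW.
pose u (g : 'I_n.+1 * seq_sub S) := mul (e g.1) (val g.2).
have [N expand_u] := expand_onto_fin e_basis u.
have [f f_X f_indep] := rado (hall_products expand_u).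
have f1 a : (f a).1 = a.1 by apply/eqP; have := f_X a; rewrite inE.
exists (fun i => [ffun b => (f (inord i, b)).2]).
apply: (indep_family_reindex (iota := fun a : 'I_n.+1 * bool => (val a.1, a.2))
          _ _ (indep_family_linear (phi := expand e N) (@expand_inj _ _ _ e_basis N) f_indep)).
  by move=> [i b] _; rewrite /product /= ffunE inord_val expand_u /u f1.
by move=> [i b] /= lt_in; exists (inord i, b); rewrite //= inordK.
Qed.

Lemma exists_indep_products : exists p, indep_family (fun _ => True) (product p).
Proof.
have [p indep_p] : exists p, forall n,
    indep_family (fun ib : nat * bool => ib.1 < n)%N (product p).
  apply: finite_choice_compactness => [n p p' agree|m n p le_mn|]; last exact: exists_indep_upto.
    apply: (indep_family_reindex (iota := id)) => [[i b] /= lt_in|ib ib_lt]; last by exists ib.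
    by rewrite /product /= agree.
  by apply: indep_familyS => ib lt_im; apply: leq_trans lt_im le_mn.
by exists p; apply: (indep_family_bounded (size_of := fst)).
Qed.

End Products.

Unset Implicit Arguments. Set Strict Implicit.

Theorem proposition3 (K : fieldType) (R : lmodType K) (mul : R -> R -> R)
  (Hmul : is_assoc_algebra_mul mul) (Haff : affine mul)
  (Hinf : infinite_dim R) (e : nat -> R) (He : is_basis e) (S : seq R)
  (Hdim : forall I : seq nat, uniq I ->
     span_dim_ge (fun y => exists i r, [/\ i \in I, r \in S & y = mul (e i) r])
                 (2 * size I)%N) :
  exists (m : nat) (A : 'I_m -> R -> Prop) (g h : 'I_m -> R),
    [/\ (* {A_k} is a partition of the basis into nonempty blocks *)
        [/\ (forall k x, A k x -> exists i, x = e i),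
             (forall k, exists x, A k x),
             (forall k k', k <> k' -> forall x, A k x -> A k' x -> False)
           & (forall i, exists k, A k (e i))],
        (forall k, g k \in S /\ h k \in S)
      & mutually_independent
          (fun kb : 'I_m * bool =>
             rmul_img mul (A kb.1) (if kb.2 then h kb.1 else g kb.1))].
Proof.
have [e_inj _ _] := He.
have [p indep_p] := exists_indep_products He Hdim.
have [m [q [q_inj q_range]]] := finite_range p.
pose A k x := exists i, x = e i /\ p i = q k.
exists m, A, (fun k => val (q k false)), (fun k => val (q k true)).
have block_product (kb : 'I_m * bool) y :
    rmul_img mul (A kb.1) (val (q kb.1 kb.2)) y ->
  exists2 i, p i = q kb.1 & y = product mul e p (i, kb.2).
  by case=> _ [[i [-> pi]] ->]; exists i; rewrite // /product /= pi.
have blockE (kb : 'I_m * bool) :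
    (if kb.2 then val (q kb.1 true) else val (q kb.1 false)) = val (q kb.1 kb.2).
  by case: kb => ? [].
split.
- split=> [k _ [i [-> _]]|k|k k' ne_kk' _ [i [-> pi]] [i' [/e_inj <- pi']]|i].
  + by exists i.
  + by have [i pi] := (q_range (q k)).1 (ex_intro _ k erefl); exists (e i), i.
  + by apply/ne_kk'/q_inj; rewrite -pi -pi'.
  + by have [k qk] := (q_range (p i)).2 (ex_intro _ i erefl); exists k, i.
- by move=> k; split; apply: valP.
split=> [[k b] [k' b'] ne_kb y|].
  rewrite !blockE => /block_product[i pi ->] /block_product[i' pi'].
  move=> /(indep_family_inj indep_p I I) [eq_ii' eq_bb'].
  by apply: ne_kb; congr (_, _) => //; apply: q_inj; rewrite -pi -pi' eq_ii'.
apply/lin_indepE/(indep_family_reindex (iota := product mul e p) _ _ indep_p) => // x [kb].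
by rewrite blockE => /block_product[i _ ->]; exists (i, kb.2).
Qed.
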